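(* Let $k_1<k_2$ be integers with $k_1\ge 3$, and let $n$ be a positive integer. If $\nu_{k_2}(n+k_2-3)=0$, then $\nu_{k_1}(n+k_1-3)=0$.
   Context: For an integer $k\ge 3$ and a positive integer $m$, $\nu_k(m)$ denotes the number of $k$-tuples of integers $(x_1,\dots,x_k)$ with $1\le x_1\le x_2\le\dots\le x_k$ such that $x_1x_2\cdots x_k+x_1+x_2+\dots+x_k=m$. *)

From mathcomp Require Import all_boot.
Set Implicit Arguments. Unset Strict Implicit. Unset Printing Implicit Defensive.

(* nu k m = number of k-tuples (x_1,...,x_k) of integers with
   1 <= x_1 <= ... <= x_k and x_1*...*x_k + x_1+...+x_k = m.
   Any such tuple has every x_i <= m (since the sum is <= m), so we may
   enumerate tuples with entries in 'I_(m.+1), i.e. in {0,...,m}. *)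
Definition nu_pred (k m : nat) (t : k.-tuple 'I_m.+1) : bool :=
  let s := map (@nat_of_ord m.+1) t in
  [&& all (fun x => 0 < x) s, sorted leq s & (\prod_(x <- s) x) + (\sum_(x <- s) x) == m].

Definition nu (k m : nat) : nat := #|[pred t : k.-tuple 'I_m.+1 | nu_pred t]|.

(* Prepending 1 to a solution of x_1 ... x_k + x_1 + ... + x_k = m leaves the
   product unchanged and raises the sum by one, so a solution for (k, m) yields
   one for (k + 1, m + 1).  Iterating k2 - k1 times maps solutions counted by
   nu k1 (n + k1 - 3) to solutions counted by nu k2 (n + k2 - 3). *)
From mathcomp Require Import all_boot zify.

Set Implicit Arguments.

Definition cons1_tuple k m (t : k.-tuple 'I_m.+1) : k.+1.-tuple 'I_m.+2 :=
  [tuple of @Ordinal m.+2 1 isT :: map (widen_ord (leqnSn m.+1)) t].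

Lemma map_val_cons1_tuple k m (t : k.-tuple 'I_m.+1) :
  map (@nat_of_ord m.+2) (cons1_tuple t) = 1 :: map (@nat_of_ord m.+1) t.
Proof. by rewrite /= -map_comp. Qed.

Lemma nu_pred_cons1_tuple k m (t : k.-tuple 'I_m.+1) :
  nu_pred t -> nu_pred (cons1_tuple t).
Proof.
rewrite /nu_pred map_val_cons1_tuple.
set s := map _ t => /and3P [s_pos s_sorted /eqP s_eq].
rewrite /= s_pos big_cons big_cons mul1n addnCA s_eq eqxx andbT.
by case: s s_pos s_sorted {s_eq} => //= x s /andP [-> _] ->.
Qed.

Lemma nu_gt0S k m : 0 < nu k m -> 0 < nu k.+1 m.+1.
Proof.
move=> /card_gt0P [t t_sol]; apply/card_gt0P; exists (cons1_tuple t).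
by rewrite inE nu_pred_cons1_tuple.
Qed.

Lemma nu_gt0_addn d k m : 0 < nu k m -> 0 < nu (d + k) (d + m).
Proof. by elim: d => [|d IHd] // /IHd; apply: nu_gt0S. Qed.

Theorem corollary2 (k1 k2 n : nat) :
  3 <= k1 -> k1 < k2 -> 0 < n ->
  nu k2 (n + k2 - 3) = 0 -> nu k1 (n + k1 - 3) = 0.
Proof.
move=> k1_ge3 lt_k12 _ nu2_eq0; apply/eqP; rewrite -leqn0 leqNgt; apply/negP.
move=> /(nu_gt0_addn (k2 - k1)).
have -> : k2 - k1 + k1 = k2 by lia.
have -> : k2 - k1 + (n + k1 - 3) = n + k2 - 3 by lia.
by rewrite nu2_eq0.
Qed.
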